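(* Let $\Omega$ be a semigroup, $(\mathcal{A},\{\mu^1,\mu^2,\dots\})$ an $A_\infty$-algebra and $\{\mathcal{R}_\alpha:\mathcal{A}\to\mathcal{A}\}_{\alpha\in\Omega}$ a homotopy Rota-Baxter family on $\mathcal{A}$. Then $(\mathcal{A},\{\eta^1,\eta^2,\dots\})$ is a $Dend_\infty$-family algebra, where $\eta^k=(\eta^{k,[1]},\dots,\eta^{k,[k]})$ with $\eta^{k,[r]}_{\alpha_1,\dots,\alpha_k}(a_1,\dots,a_k):=\mu^k\big(\mathcal{R}_{\alpha_1}(a_1),\dots,\mathcal{R}_{\alpha_{r-1}}(a_{r-1}),a_r,\mathcal{R}_{\alpha_{r+1}}(a_{r+1}),\dots,\mathcal{R}_{\alpha_k}(a_k)\big)$ for $[r]\in C_k$, $\alpha_j\in\Omega$, $a_j\in\mathcal{A}$.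
   Context: $\mathbf{k}$ is a commutative unital ring of characteristic $0$; $\Omega$ a semigroup; $\mathcal{A}=\oplus_{i\in\mathbb{Z}}\mathcal{A}^i$ graded. Sign $\pm:=(-1)^{i(n+1)+n(|a_1|+\cdots+|a_{i-1}|)}$. An $A_\infty$-algebra is $\mathcal{A}$ with multilinear maps $\mu^k:\mathcal{A}^{\otimes k}\to\mathcal{A}$ of degree $k-2$, $k\ge1$, with $\sum_{m+n=N+1}\sum_{i=1}^m\pm\,\mu^m(a_1,\dots,a_{i-1},\mu^n(a_i,\dots,a_{i+n-1}),a_{i+n},\dots,a_N)=0$ for all $N\ge1$ and homogeneous $a_j$. A homotopy Rota-Baxter family on it is a collection $\{\mathcal{R}_\alpha\}_{\alpha\in\Omega}$ of degree-$0$ linear maps with $\mu^k(\mathcal{R}_{\alpha_1}(a_1),\dots,\mathcal{R}_{\alpha_k}(a_k))=\sum_{r=1}^k\mathcal{R}_{\alpha_1\cdots\alpha_k}\big(\mu^k(\mathcal{R}_{\alpha_1}(a_1),\dots,a_r,\dots,\mathcal{R}_{\alpha_k}(a_k))\big)$ (the $r$-th argument left without $\mathcal{R}$) for all $k\ge1$, $a_j\in\mathcal{A}$, $\alpha_j\in\Omega$. $C_k=\{[1],\dots,[k]\}$ formal symbols. For $m,n\ge1$, $1\le i\le m$, $1\le r\le m+n-1$: $R_0[r]$ is $[r]$ if $r\le i-1$, $[i]$ if $i\le r\le i+n-1$, $[r-n+1]$ if $r\ge i+n$; $R_i[r]$ is $[r-i+1]$ if $i\le r\le i+n-1$ and $[1]+\cdots+[n]$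 otherwise, with $\eta^{n,[1]+\cdots+[n]}:=\sum_s\eta^{n,[s]}$. A $Dend_\infty$-family algebra is $\mathcal{A}$ with, for each $k\ge1$, $\eta^k=(\eta^{k,[1]},\dots,\eta^{k,[k]})$, each $\eta^{k,[r]}=\{\eta^{k,[r]}_{\alpha_1,\dots,\alpha_k}:\mathcal{A}^{\otimes k}\to\mathcal{A}\}_{\alpha_j\in\Omega}$ multilinear of degree $k-2$ with $\eta^{k,[r]}_{\alpha_1,\dots,\alpha_k}$ independent of $\alpha_r$, satisfying for all $N\ge1$, $[r]\in C_N$, homogeneous $a_j$, $\alpha_j\in\Omega$: $\sum_{m+n=N+1}\sum_{i=1}^m\pm\,\eta^{m,R_0[r]}_{\alpha_1,\dots,\alpha_{i-1},\alpha_i\cdots\alpha_{i+n-1},\alpha_{i+n},\dots,\alpha_N}\big(a_1,\dots,a_{i-1},\eta^{n,R_i[r]}_{\alpha_i,\dots,\alpha_{i+n-1}}(a_i,\dots,a_{i+n-1}),a_{i+n},\dots,a_N\big)=0$. *)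

From HB Require Import structures.
From mathcomp Require Import all_boot all_order all_algebra.
Set Implicit Arguments. Unset Strict Implicit. Unset Printing Implicit Defensive.
Import Order.TTheory GRing.Theory Num.Theory.
Local Open Scope ring_scope.

Definition char0 (R : comNzRingType) : Prop := forall n : nat, (0 < n)%N -> n%:R != 0 :> R.

Section Defs.
Variables (R : comNzRingType) (A : lmodType R).

(* Z-grading A = (+)_{d in Z} gr d, as a direct sum of submodules. *)
Definition is_grading (gr : int -> {pred A}) : Prop :=
  [/\ forall d, GRing.submod_closed (gr d),
      forall a : A, exists s : seq (int * A),
        all (fun p => p.2 \in gr p.1) s /\ a = \sum_(p <- s) p.2
    & forall s : seq (int * A), uniq (unzip1 s) ->
        all (fun p => p.2 \in gr p.1) s -> \sum_(p <- s) p.2 = 0 ->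
        all (fun p => p.2 == 0) s].

Definition homs (gr : int -> {pred A}) (as_ : seq A) (ds : seq int) : bool :=
  all2 (fun a d => a \in gr d) as_ ds.

(* Koszul sign (-1)^{i(n+1) + n(|a_1|+...+|a_{i-1}|)}, i 1-indexed *)
Definition ksign (i n : nat) (ds : seq int) : R :=
  (-1) ^+ (i * n.+1 + n * `|(\sum_(d <- take i.-1 ds) d)%R|%N)%N.

(* (a_1,...,a_{i-1}, f(a_i,...,a_{i+n-1}), a_{i+n},...,a_N), i 1-indexed *)
Definition plug (i n : nat) (as_ : seq A) (x : A) : seq A :=
  take i.-1 as_ ++ x :: drop (i.-1 + n) as_.

Definition block {T} (i n : nat) (s : seq T) : seq T := take n (drop i.-1 s).

(* A_infinity algebra; mu applied to a list of length k is mu^k *)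
Definition multilinear (f : seq A -> A) : Prop :=
  forall (s1 s2 : seq A) (c : R) (x y : A),
    f (s1 ++ (c *: x + y) :: s2) = c *: f (s1 ++ x :: s2) + f (s1 ++ y :: s2).

Definition is_Ainf (gr : int -> {pred A}) (mu : seq A -> A) : Prop :=
  [/\ multilinear mu,
      forall (as_ : seq A) (ds : seq int), (0 < size as_)%N -> homs gr as_ ds ->
        mu as_ \in gr (\sum_(d <- ds) d + (size as_)%:Z - 2)
    & forall (N : nat) (as_ : seq A) (ds : seq int), (0 < N)%N -> size as_ = N ->
        homs gr as_ ds ->
        \sum_(1 <= n < N.+1) \sum_(1 <= i < (N.+1 - n).+1)
          ksign i n ds *: mu (plug i n as_ (mu (block i n as_))) = 0].

Variables (Omega : Type) (op : Omega -> Omega -> Omega).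

Definition sgprod (a : Omega) (t : seq Omega) : Omega := foldl op a t.

(* (alpha_1,...,alpha_{i-1}, alpha_i...alpha_{i+n-1}, alpha_{i+n},...,alpha_N) *)
Definition plugO (i n : nat) (als : seq Omega) : seq Omega :=
  match drop i.-1 als with
  | a :: t => take i.-1 als ++ sgprod a (take n.-1 t) :: drop n.-1 t
  | [::] => als
  end.

(* (R_{al_1} a_1, ..., a_r, ..., R_{al_k} a_k), r 1-indexed *)
Definition Rexcept (Rf : Omega -> A -> A) (r : nat) (als : seq Omega) (as_ : seq A)
  : seq A :=
  [seq (if p.1 == r then p.2.2 else Rf p.2.1 p.2.2) | p <- zip (iota 1 (size as_)) (zip als as_)].

Definition is_HRB_family (gr : int -> {pred A}) (mu : seq A -> A)
  (Rf : Omega -> A -> A) : Prop :=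
  [/\ forall al (c : R) (x y : A), Rf al (c *: x + y) = c *: Rf al x + Rf al y,
      forall al d a, a \in gr d -> Rf al a \in gr d
    & forall (a0 : Omega) (alt : seq Omega) (as_ : seq A),
        size as_ = (size alt).+1 ->
        mu [seq Rf p.1 p.2 | p <- zip (a0 :: alt) as_] =
        \sum_(1 <= r < (size as_).+1) Rf (sgprod a0 alt) (mu (Rexcept Rf r (a0 :: alt) as_))].

(* R_0[r] (the index of the outer operation), all 1-indexed *)
Definition R0 (n i r : nat) : nat :=
  if (r < i)%N then r else if (r < i + n)%N then i else (r - n).+1.

(* eta^{n, R_i[r]}; [1]+...+[n] is read as the sum over s *)
Definition etaRi (eta : nat -> seq Omega -> seq A -> A) (n i r : nat)
  (als : seq Omega) (as_ : seq A) : A :=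
  if (i <= r < i + n)%N then eta (r - i).+1 als as_
  else \sum_(1 <= s < n.+1) eta s als as_.

(* eta r als as = eta^{k,[r]}_{als}(as) for size als = size as = k, 1 <= r <= k *)
Definition is_Dend_family (gr : int -> {pred A})
  (eta : nat -> seq Omega -> seq A -> A) : Prop :=
  [/\ (forall (r : nat) (als : seq Omega) (s1 s2 : seq A) (c : R) (x y : A),
         (1 <= r <= size als)%N -> size als = (size s1 + size s2).+1 ->
         eta r als (s1 ++ (c *: x + y) :: s2)
         = c *: eta r als (s1 ++ x :: s2) + eta r als (s1 ++ y :: s2)),
      (forall (r : nat) (als : seq Omega) (as_ : seq A) (ds : seq int),
         (1 <= r <= size as_)%N -> size als = size as_ -> homs gr as_ ds ->
         eta r als as_ \in gr (\sum_(d <- ds) d + (size as_)%:Z - 2)),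
      (forall (s1 s2 : seq Omega) (a b : Omega) (as_ : seq A),
         size as_ = (size s1 + size s2).+1 ->
         eta (size s1).+1 (s1 ++ a :: s2) as_ = eta (size s1).+1 (s1 ++ b :: s2) as_)
    & forall (N r : nat) (als : seq Omega) (as_ : seq A) (ds : seq int),
        (1 <= r <= N)%N -> size als = N -> size as_ = N -> homs gr as_ ds ->
        \sum_(1 <= n < N.+1) \sum_(1 <= i < (N.+1 - n).+1)
          ksign i n ds *:
            eta (R0 n i r) (plugO i n als)
              (plug i n as_ (etaRi eta n i r (block i n als) (block i n as_))) = 0].

Definition eta_of (mu : seq A -> A) (Rf : Omega -> A -> A)
  (r : nat) (als : seq Omega) (as_ : seq A) : A := mu (Rexcept Rf r als as_).

End Defs.

From mathcomp Require Import all_boot all_order all_algebra.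
From mathcomp Require Import zify.
Set Implicit Arguments. Unset Strict Implicit.
Import GRing.Theory.
Local Open Scope ring_scope.

(** Fix the output slot [r]. Each term of the Dend-infinity relation equals the
  corresponding term of the A-infinity relation evaluated at
  (R a_1, ..., a_r, ..., R a_N). When [r] lies in the inner block the two terms
  agree after renumbering the slot. Otherwise the inner operation is the sum of
  all eta^{n,[s]}, and the homotopy Rota-Baxter identity turns
  R_{alpha_i ... alpha_(i+n-1)} of that sum into mu^n(R a_i, ..., R a_(i+n-1)).
  So the Dend-infinity relation is an instance of the A-infinity relation. *)

Lemma split_at_size T (s : seq T) j : (j < size s)%N ->
  exists s1 x s2, s = s1 ++ x :: s2 /\ size s1 = j.
Proof.
move=> ltjs; case E: (drop j s) => [|x s2].
  by move/(congr1 size): E; rewrite size_drop /=; lia.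
exists (take j s), x, s2; rewrite -E cat_take_drop size_takel //.
exact: ltnW.
Qed.

Lemma split3_at_size T (s : seq T) j n : (j + n <= size s)%N ->
  exists s1 b s2, [/\ s = s1 ++ b ++ s2, size s1 = j & size b = n].
Proof.
move=> le_size; exists (take j s), (take n (drop j s)), (drop n (drop j s)).
by split; rewrite ?cat_take_drop // size_takel // ?size_drop; lia.
Qed.

Lemma block_cat T (s1 b s2 : seq T) j n : size s1 = j -> size b = n ->
  block j.+1 n (s1 ++ b ++ s2) = b.
Proof. by move=> <- <-; rewrite /block /= drop_size_cat // take_size_cat. Qed.

Lemma plug_cat (k : comNzRingType) (A : lmodType k) (s1 b s2 : seq A) x j n :
  size s1 = j -> size b = n -> plug j.+1 n (s1 ++ b ++ s2) x = s1 ++ x :: s2.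
Proof.
move=> <- <-.
by rewrite /plug /= take_size_cat // addnC -drop_drop drop_size_cat // drop_size_cat.
Qed.

Lemma plugO_cat Omega (op : Omega -> Omega -> Omega) (a1 : seq Omega) a t a2 j n :
  size a1 = j -> (size t).+1 = n ->
  plugO op j.+1 n (a1 ++ (a :: t) ++ a2) = a1 ++ sgprod op a t :: a2.
Proof.
by move=> <- <-; rewrite /plugO /= drop_size_cat //= !take_size_cat // drop_size_cat.
Qed.

Section RexceptFrom.
Variables (k : comNzRingType) (A : lmodType k) (Omega : Type) (Rf : Omega -> A -> A).

Definition Rexcept_from (m r : nat) (als : seq Omega) (as_ : seq A) : seq A :=
  [seq (if p.1 == r then p.2.2 else Rf p.2.1 p.2.2)
  | p <- zip (iota m (size as_)) (zip als as_)].

Lemma RexceptE r als as_ : Rexcept Rf r als as_ = Rexcept_from 1 r als as_.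
Proof. by []. Qed.

Lemma Rexcept_from_cons m r a als x as_ :
  Rexcept_from m r (a :: als) (x :: as_)
  = (if m == r then x else Rf a x) :: Rexcept_from m.+1 r als as_.
Proof. by []. Qed.

Lemma size_Rexcept_from m r als as_ :
  size als = size as_ -> size (Rexcept_from m r als as_) = size as_.
Proof. by move=> eq_size; rewrite size_map !size_zip size_iota eq_size !minnn. Qed.

Lemma Rexcept_from_cat m r als1 als2 as1 as2 : size als1 = size as1 ->
  Rexcept_from m r (als1 ++ als2) (as1 ++ as2)
  = Rexcept_from m r als1 as1 ++ Rexcept_from (m + size as1) r als2 as2.
Proof.
elim: as1 als1 m => [|x as1 IH] [|a als1] m //= => [_|[eq_size]].
  by rewrite addn0.
by rewrite Rexcept_from_cons IH // addSnnS.
Qed.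

Lemma Rexcept_from_shift m d r als as_ :
  Rexcept_from (m + d) (r + d) als as_ = Rexcept_from m r als as_.
Proof.
elim: as_ als m => [|x as_ IH] [|a als] m //.
by rewrite !Rexcept_from_cons eqn_add2r -addSn IH.
Qed.

Lemma Rexcept_from_out m r als as_ : ~~ (m <= r < m + size as_)%N ->
  Rexcept_from m r als as_ = [seq Rf p.1 p.2 | p <- zip als as_].
Proof.
elim: as_ als m => [|x as_ IH] [|a als] m //= r_out.
rewrite Rexcept_from_cons IH; last by move: r_out; lia.
by rewrite ifN //; move: r_out; lia.
Qed.

Lemma Rexcept_from_out_eq m m' r r' als as_ :
  ~~ (m <= r < m + size as_)%N -> ~~ (m' <= r' < m' + size as_)%N ->
  Rexcept_from m r als as_ = Rexcept_from m' r' als as_.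
Proof. by move=> r_out r'_out; rewrite !Rexcept_from_out. Qed.

Lemma homs_Rexcept_from (gr : int -> {pred A}) m r als as_ ds :
  (forall al d a, a \in gr d -> Rf al a \in gr d) -> size als = size as_ ->
  homs gr as_ ds -> homs gr (Rexcept_from m r als as_) ds.
Proof.
move=> Rf_gr; elim: as_ als ds m => [|x as_ IH] [|a als] [|d ds] m //= [eq_size].
rewrite /homs /= => /andP[x_d as_ds]; apply/andP; split; last exact: IH.
by case: ifP => _ //; apply: Rf_gr.
Qed.

End RexceptFrom.

Section HomotopyRotaBaxter.
Variables (k : comNzRingType) (A : lmodType k) (Omega : Type)
  (op : Omega -> Omega -> Omega) (mu : seq A -> A) (Rf : Omega -> A -> A).
Hypothesis Rf_linear : forall al (c : k) x y, Rf al (c *: x + y) = c *: Rf al x + Rf al y.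
Hypothesis Rf_mu : forall (a0 : Omega) (alt : seq Omega) (as_ : seq A),
  size as_ = (size alt).+1 ->
  mu [seq Rf p.1 p.2 | p <- zip (a0 :: alt) as_] =
  \sum_(1 <= r < (size as_).+1) Rf (sgprod op a0 alt) (mu (Rexcept Rf r (a0 :: alt) as_)).

Lemma RfD al x y : Rf al (x + y) = Rf al x + Rf al y.
Proof. by rewrite -[x]scale1r Rf_linear !scale1r. Qed.

Lemma Rf0 al : Rf al 0 = 0.
Proof. by apply: (addrI (Rf al 0)); rewrite -RfD !addr0. Qed.

Lemma Rf_sum_eta_of a t as_ : size as_ = (size t).+1 ->
  Rf (sgprod op a t) (\sum_(1 <= s < (size as_).+1) eta_of mu Rf s (a :: t) as_)
  = mu [seq Rf p.1 p.2 | p <- zip (a :: t) as_].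
Proof. by move=> size_as; rewrite Rf_mu // (big_morph _ (RfD _) (Rf0 _)). Qed.

Lemma eta_of_plug_cat a1 a t a2 s1 b s2 r :
  size a1 = size s1 -> size b = (size t).+1 -> size a2 = size s2 ->
  let j := size s1 in let n := size b in
  eta_of mu Rf (R0 n j.+1 r) (a1 ++ sgprod op a t :: a2)
    (s1 ++ etaRi (eta_of mu Rf) n j.+1 r (a :: t) b :: s2)
  = mu (Rexcept_from Rf 1 r a1 s1 ++ mu (Rexcept_from Rf j.+1 r (a :: t) b)
          :: Rexcept_from Rf (j.+1 + n) r a2 s2).
Proof.
move=> size_a1 size_b size_a2 j n; have n_gt0 : (0 < n)%N by rewrite /n size_b.
rewrite /eta_of RexceptE Rexcept_from_cat // Rexcept_from_cons add1n.
have block_out : ~~ (j.+1 <= r < j.+1 + n)%N ->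
    Rf (sgprod op a t) (etaRi (eta_of mu Rf) n j.+1 r (a :: t) b)
    = mu (Rexcept_from Rf j.+1 r (a :: t) b).
  by move=> r_out; rewrite /etaRi (negbTE r_out) Rf_sum_eta_of // Rexcept_from_out.
rewrite /R0; case: (ltnP r j.+1) => [r_lt|r_ge].
  congr (mu (_ ++ _ :: _)); first by rewrite ifN ?block_out //; lia.
  by apply: Rexcept_from_out_eq; rewrite ?size_a2; lia.
case: (ltnP r (j.+1 + n)) => [r_lt|r_ge'].
  congr (mu (_ ++ _ :: _)).
  - by apply: Rexcept_from_out_eq; lia.
  - rewrite eqxx /etaRi /eta_of ifT ?RexceptE; last by lia.
    rewrite -(Rexcept_from_shift _ 1 j) add1n.
    by have -> : ((r - j.+1).+1 + j = r)%N by lia.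
  - by apply: Rexcept_from_out_eq; rewrite ?size_a2; lia.
congr (mu (_ ++ _ :: _)).
- by apply: Rexcept_from_out_eq; lia.
- by rewrite ifN ?block_out //; lia.
- have -> : (j.+1 + n = j.+2 + n.-1)%N by lia.
  rewrite -(Rexcept_from_shift _ j.+2 n.-1).
  by have -> : ((r - n).+1 + n.-1 = r)%N by lia.
Qed.

Lemma dend_term_Rexcept N n j r als as_ :
  (0 < n)%N -> (j + n <= N)%N -> size als = N -> size as_ = N ->
  eta_of mu Rf (R0 n j.+1 r) (plugO op j.+1 n als)
    (plug j.+1 n as_ (etaRi (eta_of mu Rf) n j.+1 r (block j.+1 n als) (block j.+1 n as_)))
  = mu (plug j.+1 n (Rexcept Rf r als as_) (mu (block j.+1 n (Rexcept Rf r als as_)))).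
Proof.
move=> n_gt0 le_N size_als size_as.
have [|s1 [b [s2 [def_as size_s1 size_b]]]] := @split3_at_size _ as_ j n.
  by rewrite size_as.
have [|a1 [ab [a2 [def_als size_a1 size_ab]]]] := @split3_at_size _ als j n.
  by rewrite size_als.
move: size_a1 size_ab; rewrite -size_s1 -size_b => size_a1 size_ab.
subst als as_ j n; case: ab => [|a t] in size_ab size_als *.
  by move: n_gt0; rewrite -size_ab.
have size_a2 : size a2 = size s2.
  by move: size_as size_als size_ab; rewrite !size_cat /=; lia.
rewrite plugO_cat // !block_cat // plug_cat // RexceptE !Rexcept_from_cat //.
rewrite block_cat ?plug_cat ?size_Rexcept_from //.
by rewrite eta_of_plug_cat // !add1n.
Qed.

Lemma dend_sum_Rexcept N r als as_ (ds : seq int) : size als = N -> size as_ = N ->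
  \sum_(1 <= n < N.+1) \sum_(1 <= i < (N.+1 - n).+1)
    ksign k i n ds *: eta_of mu Rf (R0 n i r) (plugO op i n als)
      (plug i n as_ (etaRi (eta_of mu Rf) n i r (block i n als) (block i n as_)))
  = \sum_(1 <= n < N.+1) \sum_(1 <= i < (N.+1 - n).+1)
    ksign k i n ds *:
      mu (plug i n (Rexcept Rf r als as_) (mu (block i n (Rexcept Rf r als as_)))).
Proof.
move=> size_als size_as; apply: eq_big_nat => n /andP[n_gt0 n_le].
apply: eq_big_nat => i /andP[i_gt0 i_le]; rewrite -(prednK i_gt0).
by rewrite (dend_term_Rexcept _ _ _ size_als size_as) //; lia.
Qed.

Lemma eta_of_multilinear r als s1 s2 (c : k) x y : multilinear mu ->
  size als = (size s1 + size s2).+1 ->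
  eta_of mu Rf r als (s1 ++ (c *: x + y) :: s2)
  = c *: eta_of mu Rf r als (s1 ++ x :: s2) + eta_of mu Rf r als (s1 ++ y :: s2).
Proof.
move=> mu_lin size_als; have [|a1 [a [a2 [-> size_a1]]]] := @split_at_size _ als (size s1).
  by rewrite size_als; lia.
rewrite /eta_of !RexceptE !Rexcept_from_cat // !Rexcept_from_cons.
by case: ifP => _; rewrite ?Rf_linear mu_lin.
Qed.

Lemma eta_of_indep s1 s2 a b as_ : size as_ = (size s1 + size s2).+1 ->
  eta_of mu Rf (size s1).+1 (s1 ++ a :: s2) as_
  = eta_of mu Rf (size s1).+1 (s1 ++ b :: s2) as_.
Proof.
move=> size_as; have [|x1 [x [x2 [-> size_x1]]]] := @split_at_size _ as_ (size s1).
  by rewrite size_as; lia.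
by rewrite /eta_of !RexceptE !Rexcept_from_cat ?size_x1 // !Rexcept_from_cons add1n eqxx.
Qed.

Lemma eta_of_gr (gr : int -> {pred A}) r als as_ ds :
  (forall as_ ds, (0 < size as_)%N -> homs gr as_ ds ->
     mu as_ \in gr (\sum_(d <- ds) d + (size as_)%:Z - 2)) ->
  (forall al d a, a \in gr d -> Rf al a \in gr d) ->
  (0 < size as_)%N -> size als = size as_ -> homs gr as_ ds ->
  eta_of mu Rf r als as_ \in gr (\sum_(d <- ds) d + (size as_)%:Z - 2).
Proof.
move=> mu_gr Rf_gr as_gt0 size_als as_ds.
rewrite /eta_of RexceptE -(size_Rexcept_from Rf 1 r size_als).
by apply: mu_gr; rewrite ?size_Rexcept_from // homs_Rexcept_from.
Qed.

End HomotopyRotaBaxter.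

Theorem theorem5p13 (k : comNzRingType) (A : lmodType k) (gr : int -> {pred A})
  (Omega : Type) (op : Omega -> Omega -> Omega)
  (mu : seq A -> A) (Rf : Omega -> A -> A) :
  char0 k -> is_grading gr -> associative op ->
  is_Ainf gr mu -> is_HRB_family op gr mu Rf ->
  is_Dend_family op gr (eta_of mu Rf).
Proof.
move=> _ _ _ [mu_lin mu_gr mu_rel] [Rf_lin Rf_gr Rf_mu]; split.
- by move=> r als s1 s2 c x y _; apply: eta_of_multilinear.
- by move=> r als as_ ds /andP[r_gt0 r_le]; apply: eta_of_gr => //; lia.
- exact: eta_of_indep.
- move=> N r als as_ ds /andP[r_gt0 r_le] size_als size_as as_ds.
  rewrite dend_sum_Rexcept //; apply: mu_rel; first by lia.
    by rewrite RexceptE size_Rexcept_from // size_als.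
  by rewrite RexceptE homs_Rexcept_from // size_als.
Qed.
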